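(* Let $\{D'_i\}_{i\in\mathbb{Z}}$ be a stationary sequence of non-negative integer-valued random variables with $D'_i\sim G$, and connect the stubs according to the Coin Toss (CT) rule with degrees $D'_i$. If $G$ has bounded support, then the total length $T$ of all edges at the origin satisfies $\mathbb{E}[T]<\infty$.
   Context: Stationary means the law of $\{D'_i\}$ is invariant under index shifts. CT rule: attach $D'_i$ stubs $s_{i,1},\dots,s_{i,D'_i}$ to vertex $i$. For $j\ge1$ let $\Gamma_j=\{i\in\mathbb{Z}:D'_i\ge j\}$; the stubs $s_{i,j}$, $i\in\Gamma_j$, form level $j$. For each level $j$ separately (with independent fair coin tosses, independent of the degrees) the level-$j$ stubs are given directions alternating right, left, right, left, \dots along $\Gamma_j$ in increasing order, the direction of the stub at the first vertex $i\ge0$ of $\Gamma_j$ being determined by a fair coin. A level-$j$ stub at $i$ pointing right (left) is joined to the level-$j$ stub at the $(2j-1)$-th vertex of $\Gamma_j$ to the right (left) of $i$, producing an edge. The length of an edge $\{i,k\}$ is $|i-k|$; $T$ is the total length of all edges at vertex $0$. *)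

From HB Require Import structures.
From mathcomp Require Import all_boot all_order all_algebra.
From mathcomp Require Import all_classical all_reals all_analysis.
Set Implicit Arguments. Unset Strict Implicit. Unset Printing Implicit Defensive.
Import Order.TTheory GRing.Theory Num.Theory.
Local Open Scope classical_set_scope.
Local Open Scope ring_scope.

(* Deterministic part of the Coin Toss (CT) rule.
   d : int -> nat   are the degrees D'_i,
   c : nat -> bool  are the level coins (c j = true means "right" for the
                    stub at the first vertex i >= 0 of Gamma_j). *)
Section CT.
Variables (d : int -> nat) (c : nat -> bool).

Definition cnt_right (j : nat) (i : int) (n : nat) : nat :=
  (\sum_(1 <= t < n.+1) (j <= d (i + t%:Z)%R))%N.
Definition cnt_left (j : nat) (i : int) (n : nat) : nat :=
  (\sum_(1 <= t < n.+1) (j <= d (i - t%:Z)%R))%N.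

(* i0 is the first vertex i >= 0 of Gamma_j = {i | d i >= j} *)
Definition first_nonneg (j : nat) (i0 : int) : Prop :=
  [/\ 0 <= i0, (j <= d i0)%N & forall m : int, 0 <= m -> m < i0 -> (d m < j)%N].

Definition rank_diff (j : nat) (i0 i : int) : nat :=
  if i0 <= i then cnt_right j i0 `|i - i0|%N else cnt_left j i0 `|i0 - i|%N.

(* directions alternate along Gamma_j, the one at i0 being given by c j *)
Definition points_right (j : nat) (i : int) : Prop :=
  exists i0, first_nonneg j i0 /\ (c j (+) odd (rank_diff j i0 i)) = true.
Definition points_left (j : nat) (i : int) : Prop :=
  exists i0, first_nonneg j i0 /\ (c j (+) odd (rank_diff j i0 i)) = false.

Definition joins (j : nat) (i k : int) : Prop :=
  [/\ (1 <= j)%N, (j <= d i)%N, (j <= d k)%N &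
    (points_right j i /\ exists n : nat, k = i + n%:Z /\ cnt_right j i n = (2 * j - 1)%N)
 \/ (points_left j i /\ exists n : nat, k = i - n%:Z /\ cnt_left j i n = (2 * j - 1)%N)].

(* edges: (level, smaller endpoint, larger endpoint) *)
Definition edges : set (nat * int * int) :=
  [set e | exists i k, joins e.1.1 i k /\ e.1.2 = Num.min i k /\ e.2 = Num.max i k].

Definition edges_at0 : set (nat * int * int) :=
  [set e | edges e /\ (e.1.2 = 0 \/ e.2 = 0)].

Definition total_length {R : realType} : \bar R :=
  \esum_(e in edges_at0) (`|e.2 - e.1.2|%N%:R : R)%:E.

End CT.

From HB Require Import structures.
From mathcomp Require Import all_boot all_order all_algebra.
From mathcomp Require Import all_classical all_reals all_analysis.
From mathcomp Require Import zify measurable_realfun.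
Import Order.TTheory GRing.Theory Num.Theory.
Local Open Scope classical_set_scope.
Local Open Scope ring_scope.

(* An edge at 0 of level j joins 0 to the (2j-1)-th next vertex of Gamma_j on one side, so
   for each level and side there is at most one such edge, and its length is the number of
   m >= 0 such that the level-j partner of 0 lies beyond m.  Hence T is bounded by the series
   over j and m of the indicators "0 is in Gamma_j and its partner lies beyond m", plus the
   same for the reflected degrees.  By stationarity this event has the probability of "the
   partner of -m lies beyond 0" (mass transport), and in every configuration at most 2j-1
   vertices left of 0 have their partner beyond 0.  So level j contributes at most 2j-1 to
   E[T], and levels above the maximal degree contribute nothing. *)

Section Counting.
Variables (d : int -> nat) (j : nat).

Lemma cnt_right_recr (i : int) n :
  cnt_right d j i n.+1 = (cnt_right d j i n + (j <= d (i + n.+1%:Z)))%N.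
Proof. by rewrite /cnt_right big_nat_recr. Qed.

Lemma cnt_right_recl (i : int) n :
  cnt_right d j i n.+1 = ((j <= d (i + 1)) + cnt_right d j (i + 1) n)%N.
Proof.
rewrite /cnt_right big_nat_recl //; congr (_ + _)%N.
by apply: eq_bigr => t _; rewrite -addrA.
Qed.

Lemma cnt_left_recr (i : int) n :
  cnt_left d j i n.+1 = (cnt_left d j i n + (j <= d (i - n.+1%:Z)))%N.
Proof. by rewrite /cnt_left big_nat_recr. Qed.

Lemma cnt_right_mono (i : int) : {homo cnt_right d j i : m n / (m <= n)%N}.
Proof.
move=> m n /subnK <-; elim: (n - m)%N => [|k IH] //.
by rewrite addSn cnt_right_recr (leq_trans IH) // leq_addr.
Qed.

(* Both sides count the vertices of Gamma_j in [i - n, i]. *)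
Lemma cnt_right_left (i : int) n :
  (cnt_right d j (i - n%:Z) n + (j <= d (i - n%:Z)) =
   cnt_left d j i n + (j <= d i))%N.
Proof.
elim: n => [|n IH]; first by rewrite /cnt_right /cnt_left !big_geq // subr0.
rewrite cnt_right_recl cnt_left_recr.
have -> : i - n.+1%:Z + 1 = i - n%:Z by rewrite -addn1 PoszD opprD addrA subrK.
lia.
Qed.

End Counting.

Lemma cnt_left_reflect (d : int -> nat) j (i : int) n :
  cnt_left d j i n = cnt_right (fun k => d (- k)) j (- i) n.
Proof. by apply: eq_bigr => t _; rewrite opprD opprK. Qed.

Definition level_link (d : int -> nat) (j : nat) (a : int) (n : nat) : Prop :=
  [/\ (1 <= j)%N, (j <= d a)%N, (j <= d (a + n%:Z)%R)%N &
      cnt_right d j a n = (2 * j - 1)%N].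

Definition before_partner (d : int -> nat) (j : nat) (a : int) (m : nat) : bool :=
  (j <= d a)%N && (cnt_right d j a m < 2 * j - 1)%N.

Section LevelLinks.
Variables (d : int -> nat) (j : nat).

Lemma level_link_before (a : int) n m :
  level_link d j a n -> (m < n)%N -> before_partner d j a m.
Proof.
case=> _ da dn cn mn; rewrite /before_partner da /=.
move: mn cn dn; case: n => // n mn; rewrite cnt_right_recr => + dn; rewrite dn.
have := cnt_right_mono d j a m n mn; lia.
Qed.

Lemma level_link_uniq (a : int) n n' :
  level_link d j a n -> level_link d j a n' -> n = n'.
Proof.
wlog lt_nn' : n n' / (n < n')%N => [wlog_lt|] l l'.
  by case: (ltngtP n n') => // lt; [|symmetry]; apply: wlog_lt.
have /andP[_] := level_link_before _ _ _ l' lt_nn'.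
by case: l => _ _ _ ->; rewrite ltnn.
Qed.

Lemma level_link_reflect (a : int) n :
  level_link d j a n -> level_link (fun i => d (- i)) j (- (a + n%:Z)) n.
Proof.
case=> j1 da dn cn; split; rewrite ?opprK //; first by rewrite opprD opprK addrK.
rewrite -(cnt_left_reflect d).
by move: (cnt_right_left d j (a + n%:Z) n); rewrite addrK da dn cn => /addIn.
Qed.

Lemma joins_level_link c (i k : int) :
  joins d c j i k ->
  exists n, level_link d j (Num.min i k) n /\ Num.max i k = Num.min i k + n%:Z.
Proof.
case=> j1 di dk [[_ [n [kE cn]]] | [_ [n [kE cn]]]]; subst k.
- have le_ik : i <= i + n%:Z by rewrite lerDl.
  by exists n; rewrite (min_idPl le_ik) (max_idPr le_ik); split => //; split.
- have le_ki : i - n%:Z <= i by rewrite lerBlDr lerDl.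
  rewrite (min_idPr le_ki) (max_idPl le_ki); exists n; split; last by rewrite subrK.
  split; rewrite ?subrK //.
  by move: (cnt_right_left d j i n); rewrite di dk cn => /addIn.
Qed.

End LevelLinks.

Arguments level_link_before {d j a n m}.
Arguments level_link_uniq {d j a n n'}.
Arguments level_link_reflect {d j a n}.

Definition links_at0 (d : int -> nat) : set (nat * nat) :=
  [set jn | level_link d jn.1 0 jn.2].

Lemma edges_at0_links (d : int -> nat) c :
  edges_at0 d c `<=`
    (fun jn => (jn.1, 0, jn.2%:Z)) @` links_at0 d `|`
    (fun jn => (jn.1, - jn.2%:Z, 0)) @` links_at0 (fun i => d (- i)).
Proof.
move=> [[j a'] b'] [[i [k [/joins_level_link [n [l bE]] /= [-> ->]]]] /=].
rewrite {}bE; move: (Num.min i k) l => a l [a0|an0].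
  by subst a; left; exists (j, n); rewrite //= add0r.
have aE : a = - n%:Z by rewrite -[a](addrK n%:Z) an0 add0r.
right; exists (j, n); last by rewrite /= an0 aE.
by have := level_link_reflect l; rewrite an0 oppr0.
Qed.

Section ExtendedSums.
Context {R : realType} {T : choiceType}.

Lemma esum_le_subset (A B : set T) (f : T -> \bar R) :
  A `<=` B -> (forall x, B x -> (0 <= f x)%E) ->
  (\esum_(x in A) f x <= \esum_(x in B) f x)%E.
Proof.
move=> AB f0; rewrite esum_mkcond [leRHS]esum_mkcond; apply: le_esum => x _.
case: ifPn => xA; first by rewrite ifT //; apply/mem_set/AB/set_mem.
by case: ifPn => // xB; apply/f0/set_mem.
Qed.

Lemma esum_le_setU {A B C : set T} (f : T -> \bar R) :
  A `<=` B `|` C -> (forall x, (0 <= f x)%E) ->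
  (\esum_(x in A) f x <= \esum_(x in B) f x + \esum_(x in C) f x)%E.
Proof.
move=> ABC f0; rewrite (esumID B A) //.
by apply: leeD; apply: esum_le_subset => // x [Ax nBx]; case: (ABC x Ax).
Qed.

End ExtendedSums.

Lemma nneseries_ge_nat (R : realType) (b : nat -> bool) n :
  (forall m, (m < n)%N -> b m) -> ((n%:R : R)%:E <= \sum_(m <oo) (b m)%:R%:E)%E.
Proof.
move=> bn; apply: le_trans (nneseries_lim_ge n _); last by move=> *; rewrite lee_fin.
rewrite (eq_big_nat _ _ (F2 := fun=> 1%:E)); last by move=> i /andP[_ /bn ->].
by rewrite sumEFin sumr_const_nat subn0.
Qed.

Definition partner_series (R : realType) (d : int -> nat) : \bar R :=
  (\sum_(j <oo) \sum_(m <oo) ((before_partner d j 0 m)%:R : R)%:E)%E.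

Lemma partner_series_ge0 (R : realType) d : (0 <= partner_series R d)%E.
Proof. by apply: nneseries_ge0 => *; apply: nneseries_ge0 => *; rewrite lee_fin. Qed.

Lemma esum_links_le (R : realType) d :
  (\esum_(jn in links_at0 d) (jn.2%:R : R)%:E <= partner_series R d)%E.
Proof.
pose partners j := (\sum_(m <oo) ((before_partner d j 0 m)%:R : R)%:E)%E.
have partners_ge0 j : (0 <= partners j)%E by apply: nneseries_ge0 => *; rewrite lee_fin.
have inj_fst : set_inj (links_at0 d) fst.
  move=> [j n] [j' n'] /set_mem l /set_mem l' /= jE; subst j'.
  by rewrite (level_link_uniq l l' : n = n').
apply: (@le_trans _ _ (\esum_(jn in links_at0 d) partners jn.1)%E).
  by apply: le_esum => -[j n] l; apply: nneseries_ge_nat => m; exact: level_link_before l.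
rewrite -(esum_image _ fst partners) // /partner_series nneseries_esumT //.
exact: esum_le_subset.
Qed.

Lemma total_length_le (R : realType) d c :
  (total_length (R := R) d c <=
   partner_series R d + partner_series R (fun i => d (- i)%R))%E.
Proof.
apply: le_trans (esum_le_setU _ (edges_at0_links d c) _) _.
  by move=> *; rewrite lee_fin.
rewrite !esum_image; first last.
- by move=> [j n] [j' n'] _ _ [-> ->].
- by move=> [j n] [j' n'] _ _ [-> /eqP]; rewrite eqr_opp => /eqP[->].
apply: leeD; apply: le_trans (esum_links_le _ _); apply: le_esum => -[j n] _ /=.
  by rewrite addn0.
by rewrite sub0r opprK.
Qed.

(* The bound by the number of vertices of Gamma_j in (-N, 0] is the induction invariant. *)
Lemma sum_before_partner_shifted (d : int -> nat) j N :
  (\sum_(m < N) before_partner d j (- m%:Z) m <=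
   minn (cnt_right d j (- N%:Z) N) (2 * j - 1))%N.
Proof.
elim: N => [|N IH]; first by rewrite big_ord0.
rewrite big_ord_recr /= cnt_right_recl.
have -> : - N.+1%:Z + 1 = - N%:Z by rewrite -addn1 PoszD opprD addrNK.
move: IH; rewrite /before_partner.
case: (j <= d (- N%:Z))%N;
  have [lt|ge] := ltnP (cnt_right d j (- N%:Z) N) (2 * j - 1);
  rewrite /= ?add0n ?addn0 ?add1n; lia.
Qed.

Lemma nneseries_before_partner_shifted (R : realType) d j :
  (\sum_(m <oo) ((before_partner d j (- m%:Z) m)%:R : R)%:E <=
   ((2 * j - 1)%N%:R : R)%:E)%E.
Proof.
apply: lime_le; first by apply: is_cvg_nneseries => *; rewrite lee_fin.
apply: nearW => N; rewrite big_mkord sumEFin -natr_sum lee_fin ler_nat.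
exact: leq_trans (sum_before_partner_shifted d j N) (geq_minr _ _).
Qed.

Section NonnegIntegrals.
Context {d0 : measure_display} {T : measurableType d0} {R : realType}.
Variable mu : {measure set T -> \bar R}.

(* Unlike [ge0_le_integral], this needs no measurability: [total_length] is not known to be
   measurable. *)
Lemma le_integral_ge0 (f g : T -> \bar R) :
  (forall x, (0 <= f x)%E) -> (forall x, (f x <= g x)%E) ->
  (\int[mu]_x f x <= \int[mu]_x g x)%E.
Proof.
move=> f0 fg; have g0 x : (0 <= g x)%E by exact: le_trans (f0 x) (fg x).
rewrite !ge0_integralTE //; apply: ereal_sup_le => _ [h hf <-].
by exists h => // x; exact: le_trans (hf x) (fg x).
Qed.

Lemma bool_indicE (b : T -> bool) :
  (fun w => ((b w)%:R : R)) = \1_[set w | b w].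
Proof.
apply: funext => w; rewrite indicE.
by case: (boolP (b w)) => bw; [rewrite mem_set | rewrite memNset //; apply/negP].
Qed.

Lemma measurable_fun_bool (b : T -> bool) : measurable [set w | b w] ->
  measurable_fun setT (fun w => ((b w)%:R : R)%:E).
Proof.
by move=> mb; apply/measurable_EFinP; rewrite bool_indicE; exact: measurable_indic.
Qed.

Lemma integral_bool (b : T -> bool) : measurable [set w | b w] ->
  (\int[mu]_w ((b w)%:R : R)%:E = mu [set w | b w])%E.
Proof.
move=> mb; rewrite -[X in _ = mu X]setIT -integral_indic //.
by apply: eq_integral => w _; rewrite -bool_indicE.
Qed.

End NonnegIntegrals.

Definition short_window (j m : nat) (f : {ffun 'I_m.+1 -> nat}) : bool :=
  (j <= f ord0)%N && (\sum_(1 <= t < m.+1) (j <= f (inord t)) < 2 * j - 1)%N.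

Section StationaryDegrees.
Context {R : realType} {d0 : measure_display} {Omega : measurableType d0}.
Variables (P : probability Omega R) (D : int -> Omega -> nat).
Hypothesis measurable_D : forall (i : int) (k : nat), measurable [set w | D i w = k].
Hypothesis stationary_D : forall (m : nat) (s : 'I_m -> int) (v : 'I_m -> nat) (k : int),
  P [set w | forall t, D (s t + k) w = v t] = P [set w | forall t, D (s t) w = v t].

Definition sample {n} (s : 'I_n -> int) (w : Omega) : {ffun 'I_n -> nat} :=
  [ffun t => D (s t) w].

Lemma measurable_cylinder n (s : 'I_n -> int) (v : 'I_n -> nat) :
  measurable [set w | forall t, D (s t) w = v t].
Proof.
rewrite (_ : [set w | _] = \bigcap_(t in setT) [set w | D (s t) w = v t]).
  by apply: fin_bigcap_measurable => //; exact: finite_finset.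
by apply/seteqP; split => w /= h t; [move=> _|]; apply: h.
Qed.

Section SampleEvents.
Variables (n : nat) (Q : pred {ffun 'I_n -> nat}).

(* Events depending on finitely many degrees are countable disjoint unions of cylinders,
   indexed by the code of the observed sample. *)
Definition coded_event (s : 'I_n -> int) (N : nat) : set Omega :=
  [set w | pickle (sample s w) = N /\ Q (sample s w)].

Lemma coded_eventE (s : 'I_n -> int) N :
  coded_event s N =
  if pickle_inv N is Some v then
    if Q v then [set w | forall t : 'I_n, D (s t) w = v t] else set0
  else set0.
Proof.
case E: (pickle_inv N) => [v|]; last first.
  by apply/seteqP; split => // w [pw _]; move: E; rewrite -pw pickleK_inv.
have -> : N = pickle v by rewrite -[LHS](@pickle_invK {ffun 'I_n -> nat}) E.
have sampleE w : (sample s w = v) <-> (forall t, D (s t) w = v t).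
  by split => [<- t|h]; [rewrite ffunE | apply/ffunP => t; rewrite ffunE].
rewrite /coded_event; case: ifPn => Qv; apply/seteqP; split => w //=.
- by move=> [/(pcan_inj pickleK_inv) /sampleE].
- by move=> /sampleE sv; rewrite sv.
- by move=> [/(pcan_inj pickleK_inv) sv]; rewrite sv (negbTE Qv).
Qed.

Lemma measurable_coded_event (s : 'I_n -> int) N :
  measurable (coded_event s N).
Proof.
rewrite coded_eventE; case: pickle_inv => [v|] //.
by case: ifP => // _; exact: measurable_cylinder.
Qed.

Lemma sample_event_bigcup (s : 'I_n -> int) :
  [set w | Q (sample s w)] = \bigcup_(N in setT) coded_event s N.
Proof.
apply/seteqP; split => [w Qw|w [_ _ [_ //]]].
by exists (pickle (sample s w)).
Qed.

Lemma trivIset_coded_event (s : 'I_n -> int) : trivIset setT (coded_event s).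
Proof. by move=> N N' _ _ [w [[<- _] [<- _]]]. Qed.

Lemma measurable_sample_event (s : 'I_n -> int) :
  measurable [set w | Q (sample s w)].
Proof.
rewrite sample_event_bigcup; apply: bigcup_measurable => N _.
exact: measurable_coded_event.
Qed.

Lemma sample_event_shift (s : 'I_n -> int) (k : int) :
  P [set w | Q (sample (fun t => s t + k) w)] = P [set w | Q (sample s w)].
Proof.
rewrite !sample_event_bigcup !measure_bigcup //;
  try by [exact: trivIset_coded_event | move=> N _; exact: measurable_coded_event].
apply: eq_eseriesr => N _; rewrite !coded_eventE.
by case: pickle_inv => [v|] //; case: ifP => // _; exact: stationary_D.
Qed.

End SampleEvents.

Lemma before_partner_event j (a : int) m :
  [set w | before_partner (D^~ w) j a m] =
  [set w | short_window j m (sample (fun t : 'I_m.+1 => t%:Z + a) w)].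
Proof.
apply/seteqP; split => w; rewrite /= /before_partner /short_window !ffunE add0r;
  congr (_ && (_ < _))%N; apply: eq_big_nat => t /andP[_ tm];
  by rewrite ffunE inordK // addrC.
Qed.

Lemma measurable_before_partner j a m :
  measurable [set w | before_partner (D^~ w) j a m].
Proof. by rewrite before_partner_event; exact: measurable_sample_event. Qed.

Lemma measurable_fun_before_partner j a m :
  measurable_fun setT (fun w => ((before_partner (D^~ w) j a m)%:R : R)%:E).
Proof. exact/measurable_fun_bool/measurable_before_partner. Qed.

Lemma integral_before_partner j a m :
  (\int[P]_w ((before_partner (D^~ w) j a m)%:R : R)%:E =
   P [set w | before_partner (D^~ w) j a m])%E.
Proof. exact/integral_bool/measurable_before_partner. Qed.

Lemma prob_before_partner_shift j m :
  P [set w | before_partner (D^~ w) j 0 m] =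
  P [set w | before_partner (D^~ w) j (- m%:Z) m].
Proof.
rewrite !before_partner_event.
rewrite (sample_event_shift _ _ (fun t : 'I_m.+1 => t%:Z)).
by rewrite (sample_event_shift _ _ (fun t : 'I_m.+1 => t%:Z)).
Qed.

Lemma nneseries_prob_before_partner j :
  (\sum_(m <oo) P [set w | before_partner (D^~ w) j 0 m] <=
   ((2 * j - 1)%N%:R : R)%:E)%E.
Proof.
rewrite (eq_eseriesr (fun m _ => prob_before_partner_shift j m)).
rewrite (eq_eseriesr (fun m _ => esym (integral_before_partner j _ m))).
rewrite -integral_nneseries //; last by move=> m; exact: measurable_fun_before_partner.
apply: le_trans (le_integral_ge0 P _ (cst _) _ _) _.
- by move=> w; apply: nneseries_ge0 => *; rewrite lee_fin.
- by move=> w; exact: nneseries_before_partner_shifted.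
by rewrite integral_cst //= probability_setT mule1.
Qed.

Lemma measurable_fun_partners j : measurable_fun setT
  (fun w => \sum_(m <oo) ((before_partner (D^~ w) j 0 m)%:R : R)%:E)%E.
Proof.
apply: ge0_emeasurable_sum => [m w _ _|m _]; first by rewrite lee_fin.
exact: measurable_fun_before_partner.
Qed.

Lemma integral_partners j :
  (\int[P]_w \sum_(m <oo) ((before_partner (D^~ w) j 0 m)%:R : R)%:E =
   \sum_(m <oo) P [set w | before_partner (D^~ w) j 0 m])%E.
Proof.
rewrite integral_nneseries //; last by move=> m; exact: measurable_fun_before_partner.
by apply: eq_eseriesr => m _; exact: integral_before_partner.
Qed.

Lemma measurable_partner_series :
  measurable_fun setT (fun w => partner_series R (D^~ w)).
Proof.
apply: ge0_emeasurable_sum => [j w _ _|j _]; last exact: measurable_fun_partners.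
by apply: nneseries_ge0 => *; rewrite lee_fin.
Qed.

Variable M : nat.
Hypothesis degree_support : forall k, (M < k)%N -> P [set w | D 0 w = k] = 0.

Lemma prob_before_partner_high j m : (M < j)%N ->
  P [set w | before_partner (D^~ w) j 0 m] = 0.
Proof.
move=> Mj; have degreeE : [set w | (j <= D 0 w)%N] =
    \bigcup_(k in [set k | (j <= k)%N]) [set w | D 0 w = k].
  apply/seteqP; split => [w jD|w [k /= jk ->] //]; by exists (D 0 w).
have mB : measurable [set w | (j <= D 0 w)%N].
  by rewrite degreeE; exact: bigcup_measurable.
have PB : P [set w | (j <= D 0 w)%N] = 0.
  rewrite degreeE measure_bigcup //; last by move=> k k' _ _ [w [/= <- <-]].
  by rewrite eseries0 // => k _; rewrite inE => /(leq_trans Mj) /degree_support.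
by apply: (subset_measure0 (measurable_before_partner j 0 m) mB) => // w /andP[].
Qed.

Lemma integral_partner_series_lty :
  (\int[P]_w partner_series R (D^~ w) < +oo)%E.
Proof.
rewrite integral_nneseries //; first last.
- by move=> j w _; apply: nneseries_ge0 => *; rewrite lee_fin.
- exact: measurable_fun_partners.
rewrite (eq_eseriesr (fun j _ => integral_partners j)).
rewrite (nneseries_split 0 M.+1); last by move=> *; apply: nneseries_ge0.
rewrite [X in (_ + X)%E]eseries0 ?adde0; last first.
  by move=> j /= Mj _; rewrite eseries0 // => m _ _; exact: prob_before_partner_high.
apply: lte_sum_pinfty => j _.
exact: le_lt_trans (nneseries_prob_before_partner j) (ltry _).
Qed.

End StationaryDegrees.

Theorem proposition2p3 (R : realType) (d0 : measure_display)
  (Omega : measurableType d0) (P : probability Omega R)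
  (D : int -> Omega -> nat) (C : nat -> Omega -> bool) (G : nat -> R) :
  (* measurability *)
  (forall (i : int) (k : nat), measurable [set w | D i w = k]) ->
  (forall j : nat, measurable [set w | C j w = true]) ->
  (* stationarity: finite-dimensional laws invariant under index shifts *)
  (forall (n : nat) (s : 'I_n -> int) (v : 'I_n -> nat) (k : int),
     P [set w | forall t, D (s t + k) w = v t] = P [set w | forall t, D (s t) w = v t]) ->
  (* D'_i ~ G *)
  (forall (i : int) (k : nat), P [set w | D i w = k] = (G k)%:E) ->
  (* fair coins, independent across levels and independent of the degrees *)
  (forall (n : nat) (s : 'I_n -> int) (v : 'I_n -> nat) (J : seq nat) (b : nat -> bool),
     uniq J ->
     P [set w | (forall t, D (s t) w = v t) /\ (forall j, j \in J -> C j w = b j)]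
     = (P [set w | forall t, D (s t) w = v t] * ((2 : R)^-1 ^+ size J)%:E)%E) ->
  (* G has bounded support *)
  (exists M : nat, forall k : nat, (M < k)%N -> G k = 0) ->
  (\int[P]_w total_length (fun i => D i w) (fun j => C j w) < +oo)%E.
Proof.
move=> mD _ stationary lawD _ [M G_support].
have support k : (M < k)%N -> P [set w | D 0 w = k] = 0.
  by move=> /G_support Gk; rewrite lawD Gk.
pose D' i w := D (- i) w.
have mD' i k : measurable [set w | D' i w = k] by exact: mD.
have stationary' n (s : 'I_n -> int) v k :
    P [set w | forall t, D' (s t + k) w = v t] = P [set w | forall t, D' (s t) w = v t].
  rewrite -(stationary _ (fun t => - s t) v (- k)).
  by congr (P _); apply/seteqP; split => w /= h t; rewrite -h /D' opprD.
have support' k : (M < k)%N -> P [set w | D' 0 w = k] = 0.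
  by rewrite /D' oppr0; exact: support.
apply: le_lt_trans (le_integral_ge0 P _ _ _ (fun w => total_length_le R _ (C^~ w))) _.
  by move=> w; apply: esum_ge0 => *; rewrite lee_fin.
rewrite ge0_integralD //; do ?[exact: measurable_partner_series
                             | by move=> w _; exact: partner_series_ge0].
apply: lte_add_pinfty; first exact: integral_partner_series_lty _ _ mD stationary _ support.
exact: integral_partner_series_lty _ _ mD' stationary' _ support'.
Qed.
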